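(* Let $F=(A,R)$ be an abstract argumentation framework. If $S$ is an initial set of $F$, then there is a strongly connected component $F'=(A',R')$ of $F$ with $S\subseteq A'$.
   Context: An abstract argumentation framework is a pair $F=(A,R)$ with $A$ a finite set and $R\subseteq A\times A$ ($a\to b$ means $(a,b)\in R$). $S\subseteq A$ is admissible if it is conflict-free and every attacker of an element of $S$ is attacked by some element of $S$. An initial set is a non-empty admissible set with no non-empty admissible proper subset. For $X\subseteq A$, $F|_X=(X,R\cap(X\times X))$. A strongly connected component (SCC) of $F$ is a framework $F|_{A'}$ such that there is a directed path in $F|_{A'}$ between any two arguments of $A'$ and $A'$ is maximal with this property. *)

From mathcomp Require Import all_boot.
Set Implicit Arguments. Unset Strict Implicit. Unset Printing Implicit Defensive.

(* An argumentation framework F = (A, R): arguments form a finite type A,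
   the attack relation is R : rel A  (R a b  means  a -> b). *)

Section AF.
Variables (A : finType) (R : rel A).

Definition conflict_free (S : {set A}) : Prop :=
  forall a b, a \in S -> b \in S -> ~~ R a b.

Definition admissible (S : {set A}) : Prop :=
  conflict_free S /\
  forall a b, a \in S -> R b a -> exists2 c, c \in S & R c b.

Definition initial (S : {set A}) : Prop :=
  S != set0 /\ admissible S /\
  forall T : {set A}, T \proper S -> T != set0 -> ~ admissible T.

Definition path_in (X : {set A}) (a b : A) : Prop :=
  exists p : seq A,
    [/\ path R a p, last a p = b, a \in X & all (fun x => x \in X) p].

Definition strongly_connected (X : {set A}) : Prop :=
  forall a b, a \in X -> b \in X -> path_in X a b.

Definition scc (X : {set A}) : Prop :=
  strongly_connected X /\
  forall Y : {set A}, X \subset Y -> strongly_connected Y -> Y = X.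

End AF.

From mathcomp Require Import all_boot.

Set Implicit Arguments.
Unset Strict Implicit.
Unset Printing Implicit Defensive.

(* If a lies in an initial set S, the elements of S from which a is reachable
   still form a nonempty admissible set: a defender of such an element attacks
   its attacker, hence reaches a as well.  By minimality this set is all of S,
   so any two elements of S reach each other and S lies in the strongly
   connected component of any of its elements. *)

Section StronglyConnectedComponents.
Variables (A : finType) (R : rel A).

Lemma path_connect_last x p z :
  path R x p -> z \in p -> connect R z (last x p).
Proof.
move=> Hp zp; case/splitPr: zp Hp => p1 p2.
rewrite cat_path last_cat /= => /andP[_ /andP[_ Hp2]].
by apply/connectP; exists p2.
Qed.

Lemma path_in_connect (X : {set A}) a b : path_in R X a b -> connect R a b.
Proof. by case=> p [Hp Hl _ _]; apply/connectP; exists p. Qed.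

Definition scc_of a := [set x | connect R a x && connect R x a].

Lemma mem_scc_of a x : (x \in scc_of a) = connect R a x && connect R x a.
Proof. by rewrite inE. Qed.

Lemma scc_of_refl a : a \in scc_of a.
Proof. by rewrite mem_scc_of !connect0. Qed.

Lemma strongly_connected_scc_of a : strongly_connected R (scc_of a).
Proof.
move=> x y; rewrite !mem_scc_of => /andP[ax xa] /andP[ay ya].
have /connectP[p Hp Hl] : connect R x y by apply: connect_trans xa ay.
exists p; split => //; first by rewrite mem_scc_of ax xa.
apply/allP => z zp; rewrite mem_scc_of.
have xz : connect R x z by apply: (path_connect Hp); rewrite inE zp orbT.
have zy : connect R z y by rewrite Hl; apply: path_connect_last Hp zp.
by rewrite (connect_trans ax xz) (connect_trans zy ya).
Qed.

Lemma scc_scc_of a : scc R (scc_of a).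
Proof.
split; first exact: strongly_connected_scc_of.
move=> Y sXY scY; apply/eqP; rewrite eqEsubset sXY andbT.
have aY : a \in Y by apply: (subsetP sXY); apply: scc_of_refl.
apply/subsetP => y yY; rewrite mem_scc_of.
by rewrite (path_in_connect (scY a y aY yY)) (path_in_connect (scY y a yY aY)).
Qed.

Lemma conflict_freeS (S T : {set A}) :
  T \subset S -> conflict_free R S -> conflict_free R T.
Proof. by move=> /subsetP sTS cfS x y /sTS xS /sTS yS; apply: cfS. Qed.

Lemma admissible_reaching (S : {set A}) a :
  admissible R S -> admissible R [set x in S | connect R x a].
Proof.
case=> cfS defS; split.
  by apply: conflict_freeS cfS; apply/subsetP => x; rewrite inE => /andP[].
move=> x b; rewrite inE => /andP[xS xa] bx.
have [c cS cb] := defS x b xS bx.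
exists c => //; rewrite inE cS /=.
exact: connect_trans (connect1 cb) (connect_trans (connect1 bx) xa).
Qed.

Lemma initial_connect (S : {set A}) a x :
  initial R S -> a \in S -> x \in S -> connect R x a.
Proof.
case=> _ [admS minS] aS xS.
set T := [set y in S | connect R y a].
have sTS : T \subset S by apply/subsetP => y; rewrite inE => /andP[].
have aT : a \in T by rewrite inE aS connect0.
have : T = S.
  apply/eqP; apply/negPn/negP => neTS.
  apply: (minS T); first by rewrite properEneq neTS sTS.
    by apply/set0Pn; exists a.
  exact: admissible_reaching.
by move=> defT; move: xS; rewrite -defT inE => /andP[].
Qed.

End StronglyConnectedComponents.

Theorem proposition1 (A : finType) (R : rel A) (S : {set A}) :
  initial R S -> exists2 A' : {set A}, scc R A' & S \subset A'.
Proof.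
move=> iniS; have [neS _] := iniS.
have [a aS] := set0Pn _ neS.
exists (scc_of R a); first exact: scc_scc_of.
apply/subsetP => x xS.
by rewrite mem_scc_of !(initial_connect iniS).
Qed.
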